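(* For every $n>1$ there are finite symmetric $\mathcal L_n$-structures $\mathcal X=\langle X;X_1,\dots,X_n\rangle$ and $\mathcal Y=\langle Y;Y_1,\dots,Y_n\rangle$ such that $\mathcal X$ and $\mathcal Y$ are not isomorphic, but their reducts $\langle X;X_1,\dots,X_{n-1}\rangle$ and $\langle Y;Y_1,\dots,Y_{n-1}\rangle$ to $\mathcal L_{n-1}$ are isomorphic.
   Context: For $n\in\mathbb N$, $\mathcal L_n$ is the first-order language $\{P_1,\dots,P_n\}$ of $n$ unary predicates ($\mathcal L_0$ is the language of pure equality). An $\mathcal L_n$-structure $\mathcal F=\langle F;F_1,\dots,F_n\rangle$ has $F_i$ the interpretation of $P_i$. For $n>1$, $\mathcal F$ is symmetric if for every permutation $\sigma\in\mathfrak S_n$ the structure $\mathcal F$ is isomorphic to $\langle F;F_{\sigma(1)},\dots,F_{\sigma(n)}\rangle$, i.e. there is a bijection $\tilde\sigma:F\to F$ with $\gamma\in F_i$ iff $\tilde\sigma(\gamma)\in F_{\sigma(i)}$. *)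

From mathcomp Require Import all_boot all_fingroup.
Set Implicit Arguments. Unset Strict Implicit. Unset Printing Implicit Defensive.

(* A finite L_n-structure <F; F_1,...,F_n> is a finType F together with
   A : 'I_n -> {set F} (A i interprets the predicate P_(i+1)). *)

Definition iso_struct (X Y : finType) (n : nat)
  (A : 'I_n -> {set X}) (B : 'I_n -> {set Y}) : Prop :=
  exists f : X -> Y, bijective f /\ forall (i : 'I_n) (x : X), (x \in A i) = (f x \in B i).

Definition symmetric_struct (X : finType) (n : nat) (A : 'I_n -> {set X}) : Prop :=
  forall s : 'S_n, iso_struct A (fun i => A (s i)).

Definition reduct (X : finType) (n : nat) (A : 'I_n -> {set X}) : 'I_n.-1 -> {set X} :=
  fun j => A (widen_ord (leq_pred n) j).

From mathcomp Require Import all_boot all_fingroup.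

(* Take for X (resp. Y) the subsets of {1,...,n} of even (resp. odd) size, with
   X_i, Y_i the sets containing i.  Permuting the indices permutes the elements,
   so both structures are symmetric.  They are not isomorphic because the empty
   set lies in no X_i while every odd set lies in some Y_i.  Toggling the
   element n is a bijection between even and odd sets that does not affect
   membership of 1,...,n-1, hence an isomorphism of the reducts. *)

Set Implicit Arguments.
Unset Strict Implicit.
Unset Printing Implicit Defensive.

Lemma iso_struct_unlabelled (X Y : finType) (m : nat)
    (A : 'I_m -> {set X}) (B : 'I_m -> {set Y}) (x : X) :
  iso_struct A B -> (forall i, x \notin A i) -> exists y, forall i, y \notin B i.
Proof. by case=> f [_ fAB] xA; exists (f x) => i; rewrite -fAB. Qed.

Section Toggle.
Variables (T : finType) (a : T).

Definition toggle (S : {set T}) : {set T} := if a \in S then S :\ a else a |: S.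

Lemma toggleK : involutive toggle.
Proof.
move=> S; rewrite /toggle; have [aS | aNS] := boolP (a \in S).
  by rewrite setD11 setD1K.
by rewrite setU11 setU1K.
Qed.

Lemma odd_card_toggle S : odd #|toggle S| = ~~ odd #|S|.
Proof.
rewrite /toggle; case: ifP => aS; last by rewrite cardsU1 aS.
by rewrite [in RHS](cardsD1 a) aS negbK.
Qed.

Lemma in_toggle_neq x S : x != a -> (x \in toggle S) = (x \in S).
Proof.
by move=> xNa; rewrite /toggle; case: ifP => _; rewrite !inE (negbTE xNa).
Qed.

End Toggle.

Section ParitySets.
Variable n : nat.

Definition parity_sets (b : bool) : finType := {S : {set 'I_n} | odd #|S| == b}.

Definition mem_struct (b : bool) (i : 'I_n) : {set parity_sets b} :=
  [set S : parity_sets b | i \in val S].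

Definition parity_map (b c : bool) (f : {set 'I_n} -> {set 'I_n})
    (f_parity : forall S : {set 'I_n}, odd #|S| = b -> odd #|f S| = c)
    (S : parity_sets b) : parity_sets c :=
  exist _ (f (val S)) (introT eqP (f_parity _ (eqP (valP S)))).

Lemma bij_parity_map (b c : bool) (f g : {set 'I_n} -> {set 'I_n})
    (f_parity : forall S : {set 'I_n}, odd #|S| = b -> odd #|f S| = c)
    (g_parity : forall S : {set 'I_n}, odd #|S| = c -> odd #|g S| = b) :
  cancel f g -> cancel g f -> bijective (parity_map f_parity).
Proof.
move=> fK gK; exists (parity_map g_parity) => S; apply: val_inj.
  exact: fK.
exact: gK.
Qed.

Lemma mem_struct_sym b : symmetric_struct (mem_struct b).
Proof.
have imset_parity (s : 'S_n) (S : {set 'I_n}) :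
    odd #|S| = b -> odd #|[set s x | x in S]| = b.
  by rewrite card_imset //; apply: perm_inj.
move=> s; exists (parity_map (imset_parity s)); split.
  apply: (bij_parity_map _ (imset_parity s^-1%g)) => S;
    rewrite -imset_comp -[RHS]imset_id; apply: eq_imset => x /=;
    [exact: permK | exact: permKV].
by move=> i S; rewrite !inE /= mem_imset //; apply: perm_inj.
Qed.

Lemma mem_struct_even_odd_not_iso :
  ~ iso_struct (mem_struct false) (mem_struct true).
Proof.
pose empty : parity_sets false := exist _ set0 (introT eqP (congr1 odd (cards0 _))).
move=> /(iso_struct_unlabelled (x := empty)).
case=> [i|S SN]; first by rewrite !inE.
have /set0Pn [i iS] : val S != set0.
  by apply: contraTneq (valP S) => ->; rewrite cards0.
by move: (SN i); rewrite inE iS.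
Qed.

End ParitySets.

Lemma reduct_mem_struct_iso (m : nat) (b : bool) :
  iso_struct (reduct (@mem_struct m.+1 b)) (reduct (mem_struct (~~ b))).
Proof.
have toggle_parity c (S : {set 'I_m.+1}) :
    odd #|S| = c -> odd #|toggle ord_max S| = ~~ c.
  by rewrite odd_card_toggle => ->.
exists (parity_map (toggle_parity b)); split.
  have toggle_parity_back (S : {set 'I_m.+1}) :
      odd #|S| = ~~ b -> odd #|toggle ord_max S| = b.
    by move/toggle_parity; rewrite negbK.
  by apply: (bij_parity_map _ toggle_parity_back); apply: toggleK.
move=> j S; rewrite /reduct !inE /= in_toggle_neq //.
by rewrite -val_eqE /= neq_ltn ltn_ord.
Qed.

Theorem lemma5p6 (n : nat) (hn : 1 < n) :
  exists (X Y : finType) (A : 'I_n -> {set X}) (B : 'I_n -> {set Y}),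
    [/\ symmetric_struct A, symmetric_struct B,
        ~ iso_struct A B & iso_struct (reduct A) (reduct B)].
Proof.
case: n hn => // m _.
exists _, _, (@mem_struct m.+1 false), (@mem_struct m.+1 true).
split; [exact: mem_struct_sym | exact: mem_struct_sym |
       exact: mem_struct_even_odd_not_iso | exact: reduct_mem_struct_iso].
Qed.
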